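(* For every $n\ge0$ and $j=1,\dots,D-1$, $2n\le\deg R^{(j)}_n\le2n+D-2$.
   Context: Let $V$ be a real polynomial of even degree $D\ge2$ with leading coefficient $\gamma>0$. Contours: $\omega=e^{2\pi i/D}$, $C_0=[0,+\infty)$ oriented away from $0$, $C_k=\omega^kC_0$ oriented towards $0$, $\Gamma_k=C_0\cup C_k$ ($k=1,\dots,D-1$). On $\mathscr P^{\mathbb C}_{2n+D-2}$ (complex polynomials of degree $\le2n+D-2$) define $\alpha_j(P)=\int_{\mathbb R}e^{-2V(x)}x^jP(x)dx$ ($j=0,\dots,2n-1$) and $\beta_j(P)=-\frac1{2\pi i}\int_{\Gamma_j}e^{-V(x)}P(x)dx$ ($j=1,\dots,D-1$). $R^{(j)}_n$ is the unique polynomial in $\mathscr P^{\mathbb C}_{2n+D-2}$ with $\alpha_0(R^{(j)}_n)=\dots=\alpha_{2n-1}(R^{(j)}_n)=0$ and $\beta_k(R^{(j)}_n)=\delta_{kj}$ for $k=1,\dots,D-1$. *)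

From HB Require Import structures.
From mathcomp Require Import all_boot all_order all_algebra.
From mathcomp Require Import all_classical all_reals all_analysis.
From mathcomp Require Import complex.

Set Implicit Arguments.
Unset Strict Implicit.
Unset Printing Implicit Defensive.

Import Order.TTheory GRing.Theory Num.Theory.
Local Open Scope ring_scope.
Local Open Scope classical_set_scope.
Local Open Scope complex_scope.

Section OPDefs.
Variable R : realType.

Definition cexp (z : R[i]) : R[i] :=
  (expR (complex.Re z) * cos (complex.Im z)) +i* (expR (complex.Re z) * sin (complex.Im z)).

Definition cint (A : set R) (g : R -> R[i]) : R[i] :=
  (Rintegral (@lebesgue_measure R) A (fun x => complex.Re (g x)))
  +i* (Rintegral (@lebesgue_measure R) A (fun x => complex.Im (g x))).

Definition degV (V : {poly R}) : nat := (size V).-1.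

Definition cV (V : {poly R}) : {poly R[i]} := map_poly (real_complex R) V.

Definition omega (D : nat) : R[i] :=
  cexp (0 +i* (2 * pi / D%:R)).

Definition ray_int (c : R[i]) (f : R[i] -> R[i]) : R[i] :=
  c * cint `[0, +oo[ (fun t => f (c * t%:C)).

(* Gamma_k = C_0 ∪ C_k, with C_0 = [0,+oo) oriented away from 0 and
   C_k = omega^k C_0 oriented towards 0. *)
Definition Gamma_int (D k : nat) (f : R[i] -> R[i]) : R[i] :=
  ray_int 1 f - ray_int (omega D ^+ k) f.

Definition alphaF (V : {poly R}) (j : nat) (P : {poly R[i]}) : R[i] :=
  cint setT (fun x => (expR (- (2 * V.[x])))%:C * (x%:C) ^+ j * P.[x%:C]).

Definition betaF (V : {poly R}) (j : nat) (P : {poly R[i]}) : R[i] :=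
  - ((2 * pi)%:C * 'i)^-1 *
    Gamma_int (degV V) j (fun z => cexp (- (cV V).[z]) * P.[z]).

(* P satisfies the defining conditions of R^{(j)}_n:
   P in P^C_{2n+D-2}, alpha_0(P) = ... = alpha_{2n-1}(P) = 0,
   beta_k(P) = delta_{kj} for k = 1..D-1. *)
Definition is_Rnj (V : {poly R}) (n j : nat) (P : {poly R[i]}) : Prop :=
  [/\ (size P <= 2 * n + degV V - 1)%N,
      (forall k : nat, (k < 2 * n)%N -> alphaF V k P = 0)
    & (forall k : nat, (1 <= k <= degV V - 1)%N ->
         betaF V k P = if k == j then 1 else 0)].

End OPDefs.

From mathcomp Require Import all_boot all_order all_algebra.
From mathcomp Require Import all_classical all_reals all_analysis.
From mathcomp Require Import complex polyrcf.
From mathcomp Require Import ring lra zify.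
From mathcomp Require Import measurable_realfun.
Import Order.TTheory GRing.Theory Num.Theory.
Import numFieldNormedType.Exports.
Set Implicit Arguments.
Unset Strict Implicit.
Local Open Scope ring_scope.

(* If deg P < 2n, the conditions alpha_0(P) = ... = alpha_(2n-1)(P) = 0 make the
   real and imaginary parts of P orthogonal to themselves for the inner product
   <A, B> = \int A B e^(-2V) on real polynomials, so P = 0, contradicting
   beta_j(P) = 1.  The inner product is well defined because a polynomial V of
   even degree with positive leading coefficient g satisfies V >= g x^2 / 2 - C,
   so that every integrand is dominated by a Gaussian; it is positive definite
   because its integrands are continuous.  The upper bound is the degree
   constraint built into the definition. *)

Section PolyBounds.
Variable R : realType.
Implicit Types (x : R) (Q W : {poly R}).

Lemma normr_le_1Dsqr x : `|x| <= 1 + x ^+ 2.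
Proof.
have : 0 <= (`|x| - 2^-1) ^+ 2 by exact: sqr_ge0.
by rewrite -[x ^+ 2]real_normK ?num_real // sqrrB expr2; nra.
Qed.

Lemma poly_le_1Dsqr Q :
  exists2 K, 0 <= K & forall x, `|Q.[x]| <= K * (1 + x ^+ 2) ^+ size Q.
Proof.
exists (\sum_(i < size Q) `|Q`_i|); first exact: sumr_ge0.
move=> x; rewrite horner_coef mulr_suml.
apply: (le_trans (ler_norm_sum _ _ _)); apply: ler_sum => i _.
rewrite normrM normrX; apply: ler_wpM2l => //.
have x2_ge1 : 1 <= 1 + x ^+ 2 by rewrite lerDl sqr_ge0.
apply: (@le_trans _ _ ((1 + x ^+ 2) ^+ i)); last exact: ler_weXn2l (ltnW _).
by apply: lerXn2r; rewrite ?nnegrE ?normr_le_1Dsqr // (le_trans ler01).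
Qed.

Lemma exprn_1Dsqr_le_expR (a : R) (e : nat) : 0 < a ->
  exists M, forall x, (1 + x ^+ 2) ^+ e <= M * expR (a * x ^+ 2).
Proof.
move=> a_gt0; pose b := a / e.+1%:R; pose C := Num.max 1 b^-1.
have b_gt0 : 0 < b by rewrite divr_gt0.
have C_ge1 : 1 <= C by rewrite le_max lexx.
have Cb_ge1 : 1 <= C * b.
  have : b^-1 <= C by rewrite le_max lexx orbT.
  by move/(ler_wpM2r (ltW b_gt0)); rewrite mulVf ?lt0r_neq0.
have eb_le_a : e%:R * b <= a.
  rewrite /b mulrCA; apply: ler_piMr; first exact: ltW.
  by rewrite ler_pdivrMr ?ltr0n // mul1r ler_nat.
exists (C ^+ e) => x.
have x2_ge0 : 0 <= x ^+ 2 by exact: sqr_ge0.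
have base : 1 + x ^+ 2 <= C * expR (b * x ^+ 2).
  apply: (@le_trans _ _ (C * (1 + b * x ^+ 2))); first by nra.
  by rewrite ler_wpM2l ?expR_ge1Dx // (le_trans ler01).
apply: (@le_trans _ _ ((C * expR (b * x ^+ 2)) ^+ e)).
  apply: lerXn2r => //; rewrite nnegrE; first lra.
  by rewrite mulr_ge0 ?expR_ge0 // (le_trans ler01).
rewrite exprMn -expRM_natl ler_wpM2l ?exprn_ge0 ?(le_trans ler01) // ler_expR.
by rewrite mulrA ler_wpM2r.
Qed.

Lemma poly_le_expR_sqr Q (a : R) : 0 < a ->
  exists M, forall x, `|Q.[x]| <= M * expR (a * x ^+ 2).
Proof.
move=> a_gt0; have [K K_ge0 hK] := poly_le_1Dsqr Q.
have [M hM] := exprn_1Dsqr_le_expR (size Q) a_gt0.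
by exists (K * M) => x; rewrite -mulrA; apply: (le_trans (hK x)); rewrite ler_wpM2l.
Qed.

Lemma poly_bounded_below W : odd (size W) -> 0 < lead_coef W ->
  exists C, forall x, - C <= W.[x].
Proof.
move=> odd_sW lcW_gt0.
have [K K_ge0 hK] := poly_le_1Dsqr W.
have [n1 hn1] := poly_pinfty_gt_lc lcW_gt0.
have lcWN_gt0 : 0 < lead_coef (W \Po - 'X).
  rewrite lead_coef_comp ?size_polyN ?size_polyX // lead_coefN lead_coefX.
  case: (size W) odd_sW => //= s /negbTE odd_s.
  by rewrite -signr_odd odd_s mulr1.
have [n2 hn2] := poly_pinfty_gt_lc lcWN_gt0.
pose C := K * (1 + (n1 ^+ 2 + n2 ^+ 2)) ^+ size W.
have C_ge0 : 0 <= C by rewrite mulr_ge0 ?exprn_ge0 // addr_ge0 ?addr_ge0 ?sqr_ge0.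
exists C => x.
have [/hn1 x_large|x_lt_n1] := leP n1 x; first by lra.
have [/hn2|Nx_lt_n2] := leP n2 (- x).
  by rewrite horner_comp hornerN hornerX opprK; lra.
have x2_le : x ^+ 2 <= n1 ^+ 2 + n2 ^+ 2 by have [] := leP 0 x; nra.
have KC : K * (1 + x ^+ 2) ^+ size W <= C.
  by rewrite ler_wpM2l // lerXn2r ?nnegrE ?addr_ge0 ?sqr_ge0 // lerD2l.
by have := hK x; rewrite ler_norml => /andP[+ _]; lra.
Qed.

Lemma poly_ge_half_lc_sqr (V : {poly R}) :
  (2 <= (size V).-1)%N -> ~~ odd (size V).-1 -> 0 < lead_coef V ->
  exists C, forall x, lead_coef V / 2 * x ^+ 2 - C <= V.[x].
Proof.
move=> D_ge2 D_even g_gt0.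
set D := (size V).-1 in D_ge2 D_even *; set g := lead_coef V in g_gt0 *.
have sV : size V = D.+1 by move: D_ge2; rewrite /D; lia.
pose W := V - (g / 2) *: 'X^2.
have WD : W`_D = g - g / 2 * (D == 2)%:R.
  by rewrite coefB coefZ coefXn /g lead_coefE sV eq_sym.
have WD_gt0 : 0 < W`_D by rewrite WD; case: (D == 2); rewrite ?mulr1 ?mulr0; lra.
have sW : size W = D.+1.
  apply/anti_leq/andP; split.
    rewrite -sV (leq_trans (size_polyD _ _)) // geq_max leqnn size_polyN.
    by rewrite (leq_trans (size_scale_leq _ _)) // size_polyXn sV ltnS.
  by rewrite ltnNge; apply: contraTN WD_gt0 => /(nth_default 0) ->; rewrite ltxx.
have [C hC] : exists C, forall x, - C <= W.[x].
  by apply: poly_bounded_below; rewrite ?sW /= ?D_even // lead_coefE sW.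
exists C => x; have := hC x.
by rewrite hornerD hornerN hornerZ hornerXn; lra.
Qed.

End PolyBounds.

Section RealIntegrals.
Variable R : realType.

Lemma integrable_expR_sqr_dominated (f : R -> R) (b M : R) : 0 < b ->
  continuous f -> (forall x, `|f x| <= M * expR (- (b * x ^+ 2))) ->
  lebesgue_measure.-integrable [set: R] (EFin \o f).
Proof.
move=> b_gt0 f_cont f_le.
pose s := Num.sqrt (b *+ 2)^-1.
have s2 : s ^+ 2 = (b *+ 2)^-1 by rewrite sqr_sqrtr // invr_ge0 mulrn_wge0 // ltW.
have s_neq0 : s != 0 by rewrite -sqrf_eq0 s2 invr_eq0 mulrn_eq0 /= lt0r_neq0.
have peak_gt0 := normal_peak_gt0 s_neq0.
have gauss x : M * expR (- (b * x ^+ 2)) = M / normal_peak s * normal_pdf 0 s x.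
  rewrite /normal_pdf (negbTE s_neq0) /normal_fun subr0 s2.
  have -> : (b *+ 2)^-1 *+ 2 = b^-1.
    by rewrite -mulr_natr -[b *+ 2]mulr_natr invfM -mulrA mulVf ?pnatr_eq0 // mulr1.
  by rewrite [RHS]mulrA divfK ?(lt0r_neq0 peak_gt0) // invrK mulNr [x ^+ 2 * b]mulrC.
eapply le_integrable; last first.
- apply: (integrableZl _ (M / normal_peak s)) => //.
  exact: (integrable_normal_pdf 0 s).
- move=> x _ /=; rewrite lee_fin -gauss.
  exact: le_trans (ler_norm _).
- by apply/measurable_EFinP; exact: continuous_measurable_fun.
- exact: measurableT.
Qed.

Lemma Rintegral_continuous_gt0 (f : R -> R) (x0 : R) : continuous f ->
  (forall x, 0 <= f x) -> 0 < f x0 ->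
  lebesgue_measure.-integrable [set: R] (EFin \o f) ->
  0 < \int[lebesgue_measure]_(x in [set: R]) f x.
Proof.
move=> f_cont f_ge0 fx0_gt0 f_int; set c := f x0 / 2.
have f_mes : measurable_fun [set: R] f := continuous_measurable_fun f_cont.
have c_gt0 : 0 < c by rewrite divr_gt0.
have [r /= r_gt0 f_gt_c] : exists2 r : R, 0 < r & forall x, ball x0 r x -> c < f x.
  apply/nbhs_ballP; apply: cvgr_gt (f_cont x0) _ _.
  by rewrite /c ltr_pdivrMr // ltr_pMr // ltr1n.
have mball := measurable_ball x0 r.
apply: fine_gt0; apply/andP; split; last first.
  have := integrable_fin_num measurableT f_int.
  by rewrite fin_numE ltey => /andP[].
apply: (@lt_le_trans _ _ ((c * (r *+ 2))%:E)).
  by rewrite lte_fin mulr_gt0 // pmulrn_lgt0.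
apply: (@le_trans _ _ (\int[lebesgue_measure]_(x in ball x0 r) (f x)%:E)%E).
  rewrite EFinM -(lebesgue_measure_ball x0 (ltW r_gt0)) -integral_cst //.
  apply: ge0_le_integral => //.
  - by move=> x _; rewrite lee_fin ltW.
  - apply/measurable_EFinP; exact: measurable_funS measurableT (@subsetT _ _) f_mes.
  - by move=> x /f_gt_c /ltW.
apply: ge0_subset_integral => //; first exact/measurable_EFinP.
by move=> x _; rewrite lee_fin.
Qed.

End RealIntegrals.

Section Weight.
Variables (R : realType) (V : {poly R}).
Hypotheses (D_ge2 : (2 <= degV V)%N) (D_even : ~~ odd (degV V))
  (lcV_gt0 : 0 < lead_coef V).

Definition weight (x : R) := expR (- (2 * V.[x])).

Definition weight_int (Q : {poly R}) : R :=
  \int[lebesgue_measure]_(x in [set: R]) (weight x * Q.[x]).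

Lemma continuous_weight_poly (Q : {poly R}) :
  continuous (fun x => weight x * Q.[x]).
Proof.
move=> x; apply: cvgM; last exact: continuous_horner.
apply: continuous_comp; last exact: continuous_expR.
by apply: (@cvgN _ R^o); apply: cvgM; [exact: cvg_cst | exact: continuous_horner].
Qed.

Lemma integrable_weight_poly (Q : {poly R}) :
  lebesgue_measure.-integrable [set: R] (fun x => (weight x * Q.[x])%:E).
Proof.
have g_gt0 : 0 < lead_coef V / 2 by rewrite divr_gt0.
have [C hC] := poly_ge_half_lc_sqr D_ge2 D_even lcV_gt0.
have [M hM] := poly_le_expR_sqr Q g_gt0.
apply: (@integrable_expR_sqr_dominated _ _ (lead_coef V / 2) (expR (2 * C) * M))
  => //.
  exact: continuous_weight_poly.
move=> x; rewrite normrM ger0_norm ?expR_ge0 //.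
have w_le : weight x <= expR (2 * C) * expR (- (lead_coef V * x ^+ 2)).
  by rewrite -expRD ler_expR; have := hC x; lra.
apply: (le_trans (ler_pM (expR_ge0 _) (normr_ge0 _) w_le (hM x))).
have M_ge0 : 0 <= M.
  by have := hM 0; rewrite expr0n mulr0 expR0 mulr1; apply: le_trans.
by rewrite mulrACA -expRD ler_wpM2l ?mulr_ge0 ?expR_ge0 // ler_expR; lra.
Qed.

Lemma weight_intD (Q1 Q2 : {poly R}) :
  weight_int (Q1 + Q2) = weight_int Q1 + weight_int Q2.
Proof.
rewrite /weight_int -RintegralD //; try exact: integrable_weight_poly.
by apply: eq_Rintegral => x _; rewrite hornerD mulrDr.
Qed.

Lemma weight_intZ (c : R) (Q : {poly R}) : weight_int (c *: Q) = c * weight_int Q.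
Proof.
rewrite /weight_int -RintegralZl //; last exact: integrable_weight_poly.
by apply: eq_Rintegral => x _; rewrite hornerZ mulrCA.
Qed.

Lemma weight_int_sum (I : Type) (r : seq I) (F : I -> {poly R}) :
  weight_int (\sum_(i <- r) F i) = \sum_(i <- r) weight_int (F i).
Proof.
elim: r => [|i r IHr]; last by rewrite !big_cons weight_intD IHr.
rewrite !big_nil /weight_int; under eq_Rintegral do rewrite horner0 mulr0.
by rewrite Rintegral_cst // mul0r.
Qed.

Lemma weight_int_sqr_gt0 (A : {poly R}) : A != 0 -> 0 < weight_int (A * A).
Proof.
move=> A_neq0; have lcAA_gt0 : 0 < lead_coef (A * A).
  by rewrite lead_coefM -expr2 exprn_even_gt0 //= lead_coef_eq0.
have [x0 hx0] := poly_pinfty_gt_lc lcAA_gt0.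
apply: (Rintegral_continuous_gt0 (x0 := x0)).
- exact: continuous_weight_poly.
- by move=> x; rewrite hornerM mulr_ge0 ?expR_ge0 // -expr2 sqr_ge0.
- by rewrite mulr_gt0 ?expR_gt0 // (lt_le_trans lcAA_gt0) ?hx0.
- exact: integrable_weight_poly.
Qed.

Lemma weight_int_orthogonal_eq0 (Q : {poly R}) (m : nat) : (size Q <= m)%N ->
  (forall k, (k < m)%N -> weight_int ('X^k * Q) = 0) -> Q = 0.
Proof.
move=> sQ Q_orth; apply/eqP/negP => /negP/weight_int_sqr_gt0.
have -> : Q * Q = \sum_(i < size Q) Q`_i *: ('X^i * Q).
  rewrite -{1}[Q]coefK poly_def mulr_suml; apply: eq_bigr => i _.
  by rewrite scalerAl.
rewrite weight_int_sum big1 ?ltxx // => i _.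
by rewrite weight_intZ Q_orth ?mulr0 // (leq_trans (ltn_ord i)).
Qed.

Local Open Scope complex_scope.
Local Notation Re := (@complex.Re R).
Local Notation Im := (@complex.Im R).

Lemma map_poly_horner_real (f : {additive R[i] -> R})
    (fM : forall (r : R) (z : R[i]), f (r%:C * z) = r * f z) (P : {poly R[i]}) x :
  f P.[x%:C] = (map_poly f P).[x].
Proof.
rewrite horner_coef (horner_coef_wide _ (size_poly _ _)) raddf_sum.
by apply: eq_bigr => i _; rewrite coef_map -rmorphXn mulrC fM mulrC.
Qed.

Lemma ReM_real (r : R) (z : R[i]) : Re (r%:C * z) = r * Re z.
Proof. by case: z => a b /=; ring. Qed.

Lemma ImM_real (r : R) (z : R[i]) : Im (r%:C * z) = r * Im z.
Proof. by case: z => a b /=; ring. Qed.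

Lemma Re_alphaF k (P : {poly R[i]}) :
  Re (alphaF V k P) = weight_int ('X^k * map_poly Re P).
Proof.
apply: eq_Rintegral => x _.
rewrite -rmorphXn -rmorphM ReM_real (map_poly_horner_real ReM_real).
by rewrite hornerM hornerXn mulrA.
Qed.

Lemma Im_alphaF k (P : {poly R[i]}) :
  Im (alphaF V k P) = weight_int ('X^k * map_poly Im P).
Proof.
apply: eq_Rintegral => x _.
rewrite -rmorphXn -rmorphM ImM_real (map_poly_horner_real ImM_real).
by rewrite hornerM hornerXn mulrA.
Qed.

Lemma alphaF_orthogonal_eq0 (P : {poly R[i]}) (m : nat) : (size P <= m)%N ->
  (forall k, (k < m)%N -> alphaF V k P = 0) -> P = 0.
Proof.
move=> sP P_orth.
have part_eq0 (f : {additive R[i] -> R}) :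
    (forall k, weight_int ('X^k * map_poly f P) = f (alphaF V k P)) ->
    map_poly f P = 0.
  move=> f_alpha; apply: (weight_int_orthogonal_eq0 (m := m)).
    exact: leq_trans (size_poly _ _) sP.
  by move=> k k_lt; rewrite f_alpha P_orth ?raddf0.
have ReP0 := part_eq0 _ (fun k => esym (Re_alphaF k P)).
have ImP0 := part_eq0 _ (fun k => esym (Im_alphaF k P)).
apply/polyP => i; have := congr1 (coefp i) ReP0; have := congr1 (coefp i) ImP0.
by rewrite /= !coef_map !coef0; case: (P`_i) => a b /= -> ->.
Qed.

End Weight.

Lemma betaF0 (R : realType) (V : {poly R}) k : betaF V k 0 = 0.
Proof.
have ray0 c : ray_int c (fun z => cexp (- (cV V).[z]) * (0 : {poly R[i]}).[z]) = 0.
  rewrite (_ : (fun z => _) = fun _ => 0); last first.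
    by apply: funext => z; rewrite horner0 mulr0.
  by rewrite /ray_int /cint !Rintegral_cst //= !mul0r mulr0.
by rewrite /betaF /Gamma_int !ray0 subrr mulr0.
Qed.

Theorem mainTheorem11 (R : realType) (V : {poly R}) (n j : nat) :
  (2 <= degV V)%N -> ~~ odd (degV V) -> 0 < lead_coef V ->
  (1 <= j <= degV V - 1)%N ->
  forall P : {poly R[i]}, is_Rnj V n j P ->
  (2 * n <= (size P).-1 <= 2 * n + degV V - 2)%N.
Proof.
move=> D_ge2 D_even lcV_gt0 j_range P [sP P_alpha P_beta].
apply/andP; split; last by move: sP D_ge2; lia.
rewrite leqNgt; apply/negP => small_deg.
have P0 : P = 0.
  by apply: (alphaF_orthogonal_eq0 D_ge2 D_even lcV_gt0 (m := 2 * n)) => //; lia.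
by move: (P_beta j j_range); rewrite eqxx P0 betaF0 => /eqP; rewrite eq_sym oner_eq0.
Qed.
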